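(* For every Hausdorff topological vector space $\mathcal X$ over $\mathbb K$, the exponential vector space $\mathcal C(\mathcal X)$ has a basis, i.e. $\mathcal C(\mathcal X)\smallsetminus[\mathcal C(\mathcal X)]_0$ has a basis.
   Context: $\mathbb K$ is $\mathbb R$ or $\mathbb C$. An exponential vector space (evs) over a field $K$ is a partially ordered set $(X,\leq)$ with a binary operation $+$ on $X$ and a map $K\times X\to X$, $(\alpha,x)\mapsto \alpha x$, such that: (A1) $(X,+)$ is a commutative semigroup with identity $\theta$; (A2) $x\leq y$ implies $x+z\leq y+z$ and $\alpha x\leq \alpha y$ for all $z\in X$, $\alpha\in K$; (A3) $\alpha(x+y)=\alpha x+\alpha y$, $\alpha(\beta x)=(\alpha\beta)x$, $(\alpha+\beta)x\leq \alpha x+\beta x$, $1x=x$; (A4) $\alpha x=\theta$ iff $\alpha=0$ or $x=\theta$; (A5) $x+(-1)x=\theta$ iff $x\in X_0$, where $X_0:=\{z\in X: y\not\leq z \text{ for all } y\in X\smallsetminus\{z\}\}$ (the set of minimal elements); (A6) for each $x\in X$ there is $p\in X_0$ with $p\leq x$. $\mathcal C(\mathcal X)$ is the set of nonempty compact subsets of $\mathcal X$ with $A+B:=\{a+b:a\in A,b\in B\}$, $\alpha A:=\{\alpha a:a\in A\}$, and order given by set inclusion; it is an evs over $\mathbb K$ whose primitive space consists of the singletons. For $x\in X\smallsetminus X_0$ let $L(x):=\{z\in X: z\geq \alpha x+p \text{ for some } \alpha\in K\smallsetminus\{0\},\ p\in X_0\}$. A subset $B\subseteq X\smallsetminus X_0$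 generates $X\smallsetminus X_0$ if $X\smallsetminus X_0=\bigcup_{b\in B}L(b)$. Elements $x,y\in X\smallsetminus X_0$ are orderly dependent if $x\in L(y)$ or $y\in L(x)$, and orderly independent otherwise; $B$ is orderly independent if any two distinct members are orderly independent. A basis of $X\smallsetminus X_0$ is an orderly independent generating subset. *)

From HB Require Import structures.
From mathcomp Require Import all_boot all_order all_algebra.
From mathcomp Require Import all_classical all_reals all_analysis.
From mathcomp Require Import complex.
Set Implicit Arguments. Unset Strict Implicit. Unset Printing Implicit Defensive.
Import Order.TTheory GRing.Theory Num.Theory.
Local Open Scope classical_set_scope.
Local Open Scope ring_scope.

Section EvsNotions.
Variables (K : numFieldType) (T : Type) (X : set T) (le : T -> T -> Prop)
  (add : T -> T -> T) (smul : K -> T -> T).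

Definition primitive : set T :=
  [set z | X z /\ forall y, X y -> y <> z -> ~ le y z].

Definition Lset (x : T) : set T :=
  [set z | X z /\ exists alpha : K, alpha != 0 /\
     exists p, primitive p /\ le (add (smul alpha x) p) z].

Definition generates (B : set T) : Prop :=
  B `<=` X `\` primitive /\
  X `\` primitive = \bigcup_(b in B) Lset b.

Definition orderly_dependent (x y : T) : Prop := Lset y x \/ Lset x y.

Definition orderly_independent_set (B : set T) : Prop :=
  forall x y, B x -> B y -> x <> y -> ~ orderly_dependent x y.

Definition is_basis (B : set T) : Prop :=
  orderly_independent_set B /\ generates B.

Definition has_basis : Prop := exists B : set T, is_basis B.
End EvsNotions.

Section CompactEvs.
Variables (K : numFieldType) (E : topologicalLmodType K).

Definition CX : set (set E) := [set A | A !=set0 /\ compact A].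

Definition set_add (A B : set E) : set E :=
  [set z | exists a, A a /\ exists b, B b /\ z = a + b].

Definition set_scale (alpha : K) (A : set E) : set E :=
  [set z | exists a, A a /\ z = alpha *: a].

Definition CX_has_basis : Prop :=
  has_basis CX (fun A B : set E => A `<=` B) set_add set_scale.
End CompactEvs.

From HB Require Import structures.
From mathcomp Require Import all_boot all_order all_algebra.
From mathcomp Require Import all_classical all_reals all_analysis.
From mathcomp Require Import complex.
Set Implicit Arguments. Unset Strict Implicit. Unset Printing Implicit Defensive.
Import Order.TTheory GRing.Theory Num.Theory.
Local Open Scope classical_set_scope.
Local Open Scope ring_scope.

(* The primitive elements of C(X) are the singletons.  Choose one nonzero
   vector r on every line through the origin; the sets {0, r} form a basis.
   They generate: a non-singleton A contains u <> v, and if r spans v - u then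
   A contains {u, v} = c {0, r} + {u} for a suitable c <> 0.  They are orderly
   independent: c {0, r} + {q} is a two-point set, and it can lie inside
   {0, r'} only if r' is a nonzero multiple of r, i.e. r' = r. *)

Section CompactSetsBasis.
Variables (K : numFieldType) (E : topologicalLmodType K).

Local Notation CX := (@CX K E).
Local Notation primitive := (primitive CX (fun A B : set E => A `<=` B)).
Local Notation Lset :=
  (Lset CX (fun A B : set E => A `<=` B) (@set_add K E) (@set_scale K E)).

Definition punctured_line (x : E) : set E :=
  [set y | y != 0 /\ exists c : K, y = c *: x].

Definition line_rep (x : E) : E := xget 0 (punctured_line x).

Definition origin_pair (r : E) : set E := [set 0] `|` [set r].

Definition line_basis : set (set E) :=
  [set origin_pair (line_rep x) | x in [set x : E | x != 0]].

Lemma line_repP x : x != 0 -> punctured_line x (line_rep x).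
Proof. by move=> x0; apply: xgetPex; exists x; split => //; exists 1; rewrite scale1r. Qed.

Lemma punctured_lineZ c x : c != 0 -> punctured_line (c *: x) = punctured_line x.
Proof.
move=> c0; apply/seteqP; split=> y [y0 [k yk]]; split=> //; rewrite yk.
- by exists (k * c); rewrite scalerA.
- by exists (k / c); rewrite scalerA -mulrA mulVf ?mulr1.
Qed.

Lemma line_repZ c x : c != 0 -> line_rep (c *: x) = line_rep x.
Proof. by move=> c0; rewrite /line_rep punctured_lineZ. Qed.

Lemma line_rep_id x : x != 0 -> line_rep (line_rep x) = line_rep x.
Proof.
move=> x0; have [r0 [c rc]] := line_repP x0.
have c0 : c != 0 by apply: contraNneq r0 => c0; rewrite rc c0 scale0r.
by rewrite {1}rc line_repZ.
Qed.

Lemma line_rep_eqZ a b x y : a != 0 -> b != 0 -> x != 0 -> y != 0 ->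
  a *: line_rep x = b *: line_rep y -> line_rep x = line_rep y.
Proof.
move=> a0 b0 x0 y0 eq_ab.
by rewrite -(line_rep_id x0) -(line_repZ _ a0) eq_ab line_repZ // line_rep_id.
Qed.

Lemma origin_pair_diff r q w : origin_pair r q -> origin_pair r w -> q != w ->
  exists2 k : K, k != 0 & w - q = k *: r.
Proof.
case=> /= -> [] /= ->; rewrite ?eqxx // => _.
- by exists 1; rewrite ?oner_eq0 // scale1r subr0.
- by exists (-1); rewrite ?oppr_eq0 ?oner_eq0 // scaleN1r sub0r.
Qed.

Lemma CX_set1 (a : E) : CX [set a].
Proof. by split; [exists a | exact: compact_set1]. Qed.

Lemma CX_origin_pair r : CX (origin_pair r).
Proof. by split; [exists 0; left | apply: compactU; exact: compact_set1]. Qed.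

Lemma primitive_CXP A : primitive A <-> exists a, A = [set a].
Proof.
split.
- move=> [[[a Aa] _] minA]; exists a; apply: contrapT => neqA.
  by apply: (minA _ (CX_set1 a)) => [eqA|b ->]; [apply: neqA|].
- move=> [a ->]; split=> [|B [[b Bb] _] neqB subB]; first exact: CX_set1.
  apply: neqB; apply/seteqP; split=> // c ->.
  by rewrite -(subB _ Bb).
Qed.

Lemma two_points_not_primitive A u v : A u -> A v -> u != v -> ~ primitive A.
Proof.
move=> Au Av uv /primitive_CXP[a eqA]; rewrite eqA /= in Au Av.
by move: uv; rewrite Au Av eqxx.
Qed.

Lemma not_primitive_two_points A : CX A -> ~ primitive A ->
  exists u v, [/\ A u, A v & u != v].
Proof.
move=> [[u Au] cA] nprimA; apply: contrapT => nuv; apply: nprimA.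
apply/primitive_CXP; exists u; apply/seteqP; split=> [v Av|v ->] //=.
by apply: contrapT => /eqP vu; apply: nuv; exists v, u.
Qed.

Lemma scale_origin_pair_add1 a r q :
  set_add (set_scale a (origin_pair r)) [set q] = [set q] `|` [set a *: r + q].
Proof.
apply/seteqP; split.
- move=> _ [_ [[s [[] /= -> ->]] [_ [/= -> ->]]]].
  + by left; rewrite scaler0 add0r.
  + by right.
- move=> z [] /= ->.
  + exists 0; split; last by exists q; rewrite add0r.
    by exists 0; split; [left | rewrite scaler0].
  + by exists (a *: r); split; [exists r; split => //; right | exists q].
Qed.

Lemma Lset_origin_pairP r A : Lset (origin_pair r) A <->
  CX A /\ exists2 a : K, a != 0 & exists q, A q /\ A (a *: r + q).
Proof.
split.
- move=> [cA [a [a0 [p [/primitive_CXP[q ->]]]]]].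
  rewrite scale_origin_pair_add1 subUset !sub1set !inE => -[Aq Aw].
  by split=> //; exists a => //; exists q.
- move=> [cA [a a0 [q [Aq Aw]]]]; split=> //; exists a; split=> //.
  exists [set q]; split; first by apply/primitive_CXP; exists q.
  by rewrite scale_origin_pair_add1 subUset !sub1set !inE.
Qed.

Lemma shift_ne0 (a : K) (r q : E) : a != 0 -> r != 0 -> q != a *: r + q.
Proof. by move=> a0 r0; rewrite eq_sym -subr_eq0 addrK scaler_eq0 negb_or a0. Qed.

Lemma line_basis_independent :
  orderly_independent_set CX (fun A B : set E => A `<=` B) (@set_add K E)
    (@set_scale K E) line_basis.
Proof.
suff indep x y : x != 0 -> y != 0 -> Lset (origin_pair (line_rep x))
    (origin_pair (line_rep y)) -> line_rep x = line_rep y.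
  move=> _ _ [x x0 <-] [y y0 <-] neq [/(indep _ _ y0 x0)|/(indep _ _ x0 y0)] eqr;
  by apply: neq; rewrite eqr.
move=> x0 y0 /Lset_origin_pairP[_ [a a0 [q [Pq Pw]]]].
have [rx0 _] := line_repP x0; have [ry0 _] := line_repP y0.
have [k k0] := origin_pair_diff Pq Pw (shift_ne0 q a0 rx0).
by rewrite addrK; apply: line_rep_eqZ.
Qed.

Lemma line_basis_generates :
  generates CX (fun A B : set E => A `<=` B) (@set_add K E) (@set_scale K E)
    line_basis.
Proof.
split.
  move=> _ [x x0 <-]; split; first exact: CX_origin_pair.
  have [r0 _] := line_repP x0.
  apply: (two_points_not_primitive (u := 0) (v := line_rep x)); first by left.
    by right.
  by rewrite eq_sym.
apply/seteqP; split.
- move=> A [cA /(not_primitive_two_points cA)[u [v [Au Av uv]]]].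
  have vu0 : v - u != 0 by rewrite subr_eq0 eq_sym.
  have [r0 [c rc]] := line_repP vu0.
  have c0 : c != 0 by apply: contraNneq r0 => c0; rewrite rc c0 scale0r.
  exists (origin_pair (line_rep (v - u))); first by exists (v - u).
  apply/Lset_origin_pairP; split=> //; exists c^-1; first by rewrite invr_eq0.
  by exists u; rewrite rc scalerA mulVf // scale1r subrK.
- move=> A [_ [x x0 <-] /Lset_origin_pairP[cA [a a0 [q [Aq Aw]]]]].
  split=> //; have [r0 _] := line_repP x0.
  exact: (two_points_not_primitive Aq Aw (shift_ne0 q a0 r0)).
Qed.

Lemma CX_has_basis_lmod : CX_has_basis E.
Proof.
by exists line_basis; split; [exact: line_basis_independent | exact: line_basis_generates].
Qed.

End CompactSetsBasis.

Theorem mainTheorem11 (R : realType) :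
  (forall E : topologicalLmodType R,
      hausdorff_space E -> CX_has_basis E) /\
  (forall E : topologicalLmodType R[i],
      hausdorff_space E -> CX_has_basis E).
Proof. by split=> E _; exact: CX_has_basis_lmod. Qed.
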